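(* Let $L$ be the line graph of the Petersen graph ($15$ vertices). Coloring each pair of distinct vertices of $L$ by $b$, $a$, $c$ according as their distance in $L$ is $1$, $2$, $3$ gives a representation of the relation algebra $31_{65}$, and this representation is minimal: no representation of $31_{65}$ has fewer than $15$ vertices.
   Context: A cycle type is the multiset of colors of the sides of a triangle, e.g. $caa$ = one side $c$, two sides $a$. $31_{65}$ is the finite symmetric integral relation algebra with atoms $1',a,b,c$ whose mandatory diversity cycle types are exactly $aaa, bbb, ccc, abb, baa, caa, abc$ (so $acc, bcc, cbb$ are forbidden). A representation on a set $X$ (its vertices) is a coloring of all 2-element subsets of $X$ by $a,b,c$, each color used, such that: for every mandatory type $\{h,i,j\}$, every edge $\{x,y\}$ colored $h$ (for each choice of $h$ among the type's colors) and each ordering $(i,j)$ of the remaining two colors, some $z$ has $\{x,z\}$ colored $i$, $\{z,y\}$ colored $j$; and no triangle of a forbidden type occurs. *)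

From HB Require Import structures.
From mathcomp Require Import all_boot.
Set Implicit Arguments. Unset Strict Implicit. Unset Printing Implicit Defensive.

(** The three diversity atoms a, b, c of 31_65. *)
Inductive color := ca | cb | cc.

Definition color_to (k : color) : 'I_3 :=
  match k with ca => inord 0 | cb => inord 1 | cc => inord 2 end.
Definition color_of (i : 'I_3) : color :=
  match val i with 0 => ca | 1 => cb | _ => cc end.
Lemma color_toK : cancel color_to color_of.
Proof. by case; rewrite /color_of /color_to /= inordK. Qed.
HB.instance Definition _ := Finite.copy color (can_type color_toK).

(** Cycle types are multisets of three colors, represented as 3-element lists
    up to permutation. *)
Definition mandatory_types : seq (seq color) :=
  [:: [:: ca; ca; ca]; [:: cb; cb; cb]; [:: cc; cc; cc];
      [:: ca; cb; cb]; [:: cb; ca; ca]; [:: cc; ca; ca]; [:: ca; cb; cc]].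
Definition forbidden_types : seq (seq color) :=
  [:: [:: ca; cc; cc]; [:: cb; cc; cc]; [:: cc; cb; cb]].

Definition mandatory (h i j : color) : bool :=
  has (perm_eq [:: h; i; j]) mandatory_types.
Definition forbidden (h i j : color) : bool :=
  has (perm_eq [:: h; i; j]) forbidden_types.

(** A coloring of the 2-element subsets of X is given as a function
    col : X -> X -> color that is symmetric on distinct pairs
    (its values on the diagonal are irrelevant). *)
Definition representation (X : finType) (col : X -> X -> color) : Prop :=
  [/\ (forall x y, x != y -> col x y = col y x),
      (forall k, exists x y, x != y /\ col x y = k),
      (forall h i j, mandatory h i j ->
         forall x y, x != y -> col x y = h ->
           exists z, [/\ z != x, z != y, col x z = i & col z y = j]) &
      (forall x y z, x != y -> y != z -> x != z ->
         ~~ forbidden (col x y) (col y z) (col x z))].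

(** Petersen graph: vertices are the 2-subsets of {0,..,4}, adjacent iff
    disjoint.  Its edges are the sets {u, v} of two adjacent vertices. *)
Definition pet_vertex (u : {set 'I_5}) : bool := #|u| == 2.
Definition pet_edge (E : {set {set 'I_5}}) : bool :=
  [exists u, exists v,
     [&& pet_vertex u, pet_vertex v, [disjoint u & v] & E == [set u; v]]].

Notation LV := ({E : {set {set 'I_5}} | pet_edge E}).
Definition adjL (e f : LV) : bool :=
  (e != f) && (val e :&: val f != set0).

Fixpoint reachL (k : nat) (x y : LV) : bool :=
  match k with
  | 0 => x == y
  | k'.+1 => reachL k' x y || [exists z, reachL k' x z && adjL z y]
  end.
Definition distL (k : nat) (x y : LV) : bool :=
  reachL k x y && ~~ reachL k.-1 x y.

(** Color by distance: 1 -> b, 2 -> a, 3 -> c (the fallback branch is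
    unreachable for distinct vertices, as asserted in the theorem). *)
Definition colL (x y : LV) : color :=
  if distL 1 x y then cb else if distL 2 x y then ca else cc.

From mathcomp Require Import all_boot.
Set Implicit Arguments. Unset Strict Implicit. Unset Printing Implicit Defensive.

(* The vertices of L are the 15 edges {{a, b}, {c, d}} of the Petersen graph; encoded as pairs of
   pairs of naturals, their distances in L and all the axioms of 31_65 for the distance colouring
   are checked by evaluation.
   Minimality: in a representation every vertex has neighbours of every colour.  The c-ball of
   x (x with its c-neighbours) has at least 3 elements by ccc, and since acc and bcc are
   forbidden, the c-balls of x and y are disjoint when xy is not coloured c.  Since cbb is
   forbidden, no two b-neighbours of x are c-related, and by abb and bbb every b-neighbour of x
   has both an a- and a b-neighbour among them, so there are at least 4 of them.  Thus x and its
   b-neighbours have 5 disjoint c-balls, and 15 <= |X|. *)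

(* Equality on [color] is inherited from ['I_3] through [inord], which does not reduce by
   evaluation; [color_code] gives a computable copy of it. *)
Definition color_code (k : color) : nat := match k with ca => 0 | cb => 1 | cc => 2 end.

Lemma color_code_inj : injective color_code.
Proof. by case; case. Qed.

Definition color_eqb (k l : color) : bool := color_code k == color_code l.

Lemma color_eqbE k l : color_eqb k l = (k == l).
Proof. exact: (inj_eq color_code_inj). Qed.

Lemma has_perm_eq_map (T U : eqType) (f : T -> U) (s : seq T) (ts : seq (seq T)) :
  injective f -> has (perm_eq (map f s)) (map (map f) ts) = has (perm_eq s) ts.
Proof.
move=> f_inj; rewrite has_map; apply: eq_has => t /=.
by apply/idP/idP => [/(perm_map_inj f_inj)|/(perm_map f)].
Qed.

Definition mandatory_code (h i j : color) : bool :=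
  has (perm_eq (map color_code [:: h; i; j])) (map (map color_code) mandatory_types).
Definition forbidden_code (h i j : color) : bool :=
  has (perm_eq (map color_code [:: h; i; j])) (map (map color_code) forbidden_types).

Lemma mandatory_codeE h i j : mandatory_code h i j = mandatory h i j.
Proof. exact: has_perm_eq_map color_code_inj. Qed.

Lemma forbidden_codeE h i j : forbidden_code h i j = forbidden h i j.
Proof. exact: has_perm_eq_map color_code_inj. Qed.

Definition colors : seq color := [:: ca; cb; cc].

Lemma mem_colors k : k \in colors.
Proof. by case: k; rewrite !inE eqxx ?orbT. Qed.

Definition representation_on (T : eqType) (s : seq T) (col : T -> T -> color) : bool :=
  [&& all (fun x => all (fun y => (x != y) ==> color_eqb (col x y) (col y x)) s) s,
      all (fun k => has (fun x => has (fun y => (x != y) && color_eqb (col x y) k) s) s) colors,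
      all (fun h => all (fun i => all (fun j => mandatory_code h i j ==>
        all (fun x => all (fun y => (x != y) && color_eqb (col x y) h ==>
          has (fun z => [&& z != x, z != y, color_eqb (col x z) i & color_eqb (col z y) j]) s) s) s)
        colors) colors) colors &
      all (fun x => all (fun y => all (fun z => [&& x != y, y != z & x != z] ==>
        ~~ forbidden_code (col x y) (col y z) (col x z)) s) s) s].

Section Transfer.
Variables (T : eqType) (X : finType) (f : T -> X) (s : seq T).
Hypothesis f_inj : {in s &, injective f}.
Hypothesis f_onto : forall x, exists2 t, t \in s & f t = x.

Lemma card_transfer : uniq s -> #|X| = size s.
Proof.
move=> s_uniq; rewrite -(size_map f).
have/card_uniqP <- : uniq (map f s) by rewrite map_inj_in_uniq.
by apply: eq_card => x; have [t ts <-] := f_onto x; rewrite map_f.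
Qed.

Lemma representation_transfer (c : T -> T -> color) (col : X -> X -> color) :
  {in s &, forall t u, col (f t) (f u) = c t u} -> representation_on s c -> representation col.
Proof.
move=> fc /and4P[/allP sym /allP ex /allP man /allP forb].
have eqf := inj_in_eq f_inj.
split.
- move=> x y; have [t ts <-] := f_onto x; have [u us <-] := f_onto y.
  rewrite eqf // !fc // => tu; apply/eqP; rewrite -color_eqbE.
  by have /allP/(_ u us) := sym t ts; rewrite tu.
- move=> k; have /hasP[t ts /hasP[u us /andP[tu tuk]]] := ex k (mem_colors k).
  by exists (f t), (f u); rewrite eqf // fc //; split=> //; apply/eqP; rewrite -color_eqbE.
- move=> h i j; rewrite -mandatory_codeE => hij x y.
  have [t ts <-] := f_onto x; have [u us <-] := f_onto y.
  rewrite eqf // fc // => tu tuh.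
  have /allP/(_ i (mem_colors i))/allP/(_ j (mem_colors j)) := man h (mem_colors h).
  rewrite hij => /allP/(_ t ts)/allP/(_ u us).
  rewrite tu tuh color_eqbE eqxx => /hasP[v vs /and4P[vt vu tvi vuj]].
  by exists (f v); rewrite !eqf // !fc //; split=> //; apply/eqP; rewrite -color_eqbE.
- move=> x y z; have [t ts <-] := f_onto x; have [u us <-] := f_onto y.
  have [v vs <-] := f_onto z; rewrite !eqf // !fc // -forbidden_codeE => tu uv tv.
  by have /allP/(_ u us)/allP/(_ v vs) := forb t ts; rewrite tu uv tv.
Qed.
End Transfer.

Lemma card_bigcup_disjoint (I T : finType) (F : I -> {set T}) :
  (forall i j, i != j -> [disjoint F i & F j]) -> #|\bigcup_i F i| = \sum_i #|F i|.
Proof.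
move=> disjF; rewrite -sum1_card (partition_disjoint_bigcup _ _ disjF).
by apply: eq_bigr => i _; rewrite sum1_card.
Qed.

Section Minimality.
Variables (X : finType) (col : X -> X -> color).
Hypothesis col_rep : representation col.

Lemma col_sym x y : x != y -> col x y = col y x.
Proof. by case: col_rep => sym _ _ _; apply: sym. Qed.

Lemma mandatory_step h i j x y : mandatory_code h i j -> x != y -> col x y = h ->
  exists z, [/\ z != x, z != y, col x z = i & col z y = j].
Proof. by case: col_rep => _ _ man _; rewrite mandatory_codeE => /man; apply. Qed.

Lemma not_forbidden x y z : x != y -> y != z -> x != z ->
  forbidden_code (col x y) (col y z) (col x z) = false.
Proof. by case: col_rep => _ _ _ forb *; rewrite forbidden_codeE; apply/negbTE/forb. Qed.

Definition has_nbr (x : X) (k : color) : Prop := exists2 y, y != x & col x y = k.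

Lemma has_nbr_step h i j x : mandatory_code h i j -> has_nbr x h -> has_nbr x i.
Proof.
move=> hij [y yx xy]; rewrite eq_sym in yx.
by have [z [zx _ xz _]] := mandatory_step hij yx xy; exists z.
Qed.

Lemma has_nbr_all x k : has_nbr x k.
Proof.
have [y yx] : exists y, y != x.
  case: col_rep => _ /(_ ca) [u [v [uv _]]] _ _.
  by case: (eqVneq u x) => [<-|ux]; [exists v; rewrite eq_sym | exists u].
have nbr_a : has_nbr x ca.
  case xy: (col x y); first by exists y.
    by apply: (@has_nbr_step cb ca cb x isT); exists y.
  by apply: (@has_nbr_step cc ca ca x isT); exists y.
case: k => //; first exact: (@has_nbr_step ca cb cb x isT).
exact: (@has_nbr_step ca cc ca x isT).
Qed.

Definition c_ball (x : X) : {set X} := [set y | (y == x) || (col x y == cc)].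

Lemma c_ball_card x : 3 <= #|c_ball x|.
Proof.
have [y yx xy] := has_nbr_all x cc; rewrite eq_sym in yx.
have [z [zx zy xz _]] := @mandatory_step cc cc cc x y isT yx xy.
apply/card_geqP; exists [:: x; y; z]; split=> //=.
  by rewrite !inE negb_or yx ![_ == z]eq_sym zx zy.
by move=> w; rewrite !inE => /or3P[]/eqP->; rewrite ?xy ?xz eqxx ?orbT.
Qed.

Lemma c_ball_disjoint x y : x != y -> col x y != cc -> [disjoint c_ball x & c_ball y].
Proof.
move=> xy xyc; have yxc : col y x != cc by rewrite -col_sym.
rewrite -setI_eq0; apply/eqP/setP => z; rewrite !inE.
apply/negbTE; apply/negP => /andP[/orP[/eqP zx|xzc] /orP[/eqP zy|yzc]].
- by move: xy; rewrite -zx -zy eqxx.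
- by move: yzc yxc; rewrite zx => ->.
- by move: xzc xyc; rewrite zy => ->.
have yz : y != z by apply: contraNneq xyc => ->.
have xz : x != z by apply: contraNneq yxc => ->.
have := not_forbidden xy yz xz; rewrite (eqP xzc) (eqP yzc).
by case: (col x y) xyc; rewrite ?eqxx.
Qed.

Definition b_nbhd (x : X) : {set X} := [set y | (y != x) && (col x y == cb)].

Lemma b_nbhd_partner x y k : mandatory_code cb cb k -> y \in b_nbhd x ->
  exists2 z, z \in b_nbhd x & z != y /\ col z y = k.
Proof.
move=> bbk; rewrite inE => /andP[yx /eqP xy]; rewrite eq_sym in yx.
have [z [zx zy xz zyk]] := mandatory_step bbk yx xy.
by exists z; rewrite // inE zx xz eqxx.
Qed.

Lemma b_nbhd_card x : 4 <= #|b_nbhd x|.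
Proof.
have [y1 y1x xy1] := has_nbr_all x cb.
have y1B : y1 \in b_nbhd x by rewrite inE y1x xy1 eqxx.
have [y2 y2B [y21 c21]] := b_nbhd_partner (k := cb) isT y1B.
have [y3 y3B [y31 c31]] := b_nbhd_partner (k := ca) isT y1B.
have y32 : y3 != y2 by apply/eqP => E; move: c31; rewrite E c21.
have [z zB [zy3 cz3]] := b_nbhd_partner (k := cb) isT y3B.
have zy1 : z != y1 by apply/eqP => E; move: cz3; rewrite E col_sym 1?eq_sym // c31.
apply/card_geqP; case: (eqVneq z y2) => [zy2|zy2].
  have [w wB [wy2 cw2]] := b_nbhd_partner (k := ca) isT y2B.
  have wy1 : w != y1 by apply/eqP => E; move: cw2; rewrite E col_sym 1?eq_sym // c21.
  have wy3 : w != y3 by apply/eqP => E; move: cw2; rewrite E -zy2 col_sym 1?eq_sym // cz3.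
  exists [:: y1; y2; y3; w]; split=> //=; last by move=> v; rewrite mem_seq4 => /or4P[]/eqP->.
  by rewrite !inE !negb_or !(eq_sym y3) !(eq_sym y2) !(eq_sym y1) y21 y31 wy1 y32 wy2 wy3.
exists [:: y1; y2; y3; z]; split=> //=; last by move=> v; rewrite mem_seq4 => /or4P[]/eqP->.
by rewrite !inE !negb_or !(eq_sym y3) !(eq_sym y2) !(eq_sym y1) y21 y31 zy1 y32 zy2 zy3.
Qed.

Lemma card_ge_c_balls (S : {set X}) :
  {in S &, forall x y, x != y -> col x y != cc} -> 3 * #|S| <= #|X|.
Proof.
move=> Snc; pose F (i : {x | x \in S}) := c_ball (val i).
have disjF i j : i != j -> [disjoint F i & F j].
  move=> ij; apply: c_ball_disjoint; rewrite ?val_eqE //.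
  by apply: Snc; rewrite ?val_eqE ?(valP i) ?(valP j).
apply: leq_trans (max_card (mem (\bigcup_i F i))); rewrite card_bigcup_disjoint //.
rewrite -[#|S|]card_sig mulnC -sum_nat_const; apply: leq_sum => i _; exact: c_ball_card.
Qed.

Lemma representation_card : 15 <= #|X|.
Proof.
case: (col_rep) => _ /(_ ca) [x _] _ _.
pose S := x |: b_nbhd x.
have S_card : 5 <= #|S| by rewrite cardsU1 inE eqxx /= add1n ltnS b_nbhd_card.
have Snc : {in S &, forall y z, y != z -> col y z != cc}.
  move=> y z; rewrite !inE => /orP[/eqP->|/andP[yx /eqP xy]] /orP[/eqP->|/andP[zx /eqP xz]] yz.
  - by rewrite eqxx in yz.
  - by rewrite xz -color_eqbE.
  - by rewrite col_sym // xy -color_eqbE.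
  rewrite eq_sym in yx; rewrite eq_sym in zx.
  by apply/eqP => yzc; have := not_forbidden yx yz zx; rewrite xy yzc xz.
by apply: leq_trans (card_ge_c_balls Snc); rewrite -[15]/(3 * 5) leq_mul2l.
Qed.
End Minimality.

Definition sym2 (T : Type) (r : rel T) : rel (T * T) :=
  fun x y => (r x.1 y.1 && r x.2 y.2) || (r x.1 y.2 && r x.2 y.1).
Definition meet2 (T : Type) (r : rel T) : rel (T * T) :=
  fun x y => [|| r x.1 y.1, r x.1 y.2, r x.2 y.1 | r x.2 y.2].

Lemma sym2_meet2 (T : Type) (r : rel T) x y : sym2 r x y -> meet2 r x y.
Proof. by rewrite /meet2; case/orP=> /andP[-> _]; rewrite ?orbT. Qed.

Lemma eq_set2 (T : finType) (a b c d : T) : a != b -> c != d ->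
  ([set a; b] == [set c; d]) = sym2 eq_op (a, b) (c, d).
Proof.
move=> ab cd; rewrite /sym2 /=.
apply/eqP/idP => [E|/orP[]/andP[/eqP-> /eqP->] //]; last exact: setUC.
have := set21 a b; have := set22 a b; rewrite E !inE.
by case/orP=> /eqP bE /orP[]/eqP aE; move: ab; rewrite aE bE !eqxx ?orbT.
Qed.

Lemma meet_set2 (T : finType) (a b c d : T) :
  ([set a; b] :&: [set c; d] != set0) = meet2 eq_op (a, b) (c, d).
Proof.
rewrite /meet2 /=; apply/set0Pn/idP => [[x]|].
  by rewrite !inE => /andP[/orP[]/eqP-> /orP[]/eqP->]; rewrite eqxx ?orbT.
by case/or4P=> /eqP->; [exists c | exists d | exists c | exists d]; rewrite !inE !eqxx ?orbT.
Qed.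

Lemma inord_eq n a b : a < n.+1 -> b < n.+1 -> (inord a == inord b :> 'I_n.+1) = (a == b).
Proof. by move=> an bn; rewrite -val_eqE /= !inordK. Qed.

Local Notation edge_code := ((nat * nat) * (nat * nat))%type.

(* The code ((a, b), (c, d)) stands for the Petersen edge {{a, b}, {c, d}}. *)
Definition pair_set (p : nat * nat) : {set 'I_5} := [set inord p.1; inord p.2].
Definition edge_set (e : edge_code) : {set {set 'I_5}} :=
  [set pair_set e.1; pair_set e.2].

Definition valid_pair (p : nat * nat) : bool := [&& p.1 < 5, p.2 < 5 & p.1 != p.2].
Definition valid_edge (e : edge_code) : bool :=
  [&& valid_pair e.1, valid_pair e.2 & ~~ meet2 eq_op e.1 e.2].

Lemma eq_pair_set p q : valid_pair p -> valid_pair q ->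
  (pair_set p == pair_set q) = sym2 eq_op p q.
Proof. by case/and3P=> ? ? ? /and3P[? ? ?]; rewrite eq_set2 /sym2 /= ?(inord_eq (n:=4)). Qed.

Lemma meet_pair_set p q : valid_pair p -> valid_pair q ->
  (pair_set p :&: pair_set q != set0) = meet2 eq_op p q.
Proof. by case/and3P=> ? ? ? /and3P[? ? ?]; rewrite meet_set2 /meet2 /= !(inord_eq (n:=4)). Qed.

Lemma valid_edge_neq e : valid_edge e -> pair_set e.1 != pair_set e.2.
Proof. by case/and3P=> ? ? dj; rewrite eq_pair_set //; apply: contra dj; apply: sym2_meet2. Qed.

Lemma eq_edge_set e g : valid_edge e -> valid_edge g ->
  (edge_set e == edge_set g) = sym2 (sym2 eq_op) e g.
Proof.
move=> ve vg; rewrite eq_set2 ?valid_edge_neq //.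
by case/and3P: ve vg => ? ? _ /and3P[? ? _]; rewrite [LHS]/sym2 /= !eq_pair_set.
Qed.

Lemma meet_edge_set e g : valid_edge e -> valid_edge g ->
  (edge_set e :&: edge_set g != set0) = meet2 (sym2 eq_op) e g.
Proof.
by case/and3P=> ? ? _ /and3P[? ? _]; rewrite meet_set2 [LHS]/meet2 /= !eq_pair_set.
Qed.

Lemma pet_edge_set e : valid_edge e -> pet_edge (edge_set e).
Proof.
case/and3P=> /[dup] ve1 /and3P[? ? ne1] /[dup] ve2 /and3P[? ? ne2] dj.
apply/existsP; exists (pair_set e.1); apply/existsP; exists (pair_set e.2).
rewrite /pet_vertex !cards2 !(inord_eq (n:=4)) // ne1 ne2 /=.
by rewrite -setI_eq0 -[_ == set0]negbK meet_pair_set // dj eqxx.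
Qed.

Definition pair_codes : seq (nat * nat) := [seq (a, b) | a <- iota 0 5, b <- iota 0 5].
Definition edge_codes : seq edge_code :=
  [seq (p, q) | p <- pair_codes, q <- pair_codes].
Definition normal_edge (e : edge_code) : bool :=
  [&& e.1.1 < e.1.2, e.2.1 < e.2.2 & e.1.1 < e.2.1].
Definition line_codes : seq edge_code :=
  [seq e <- edge_codes | valid_edge e && normal_edge e].

Lemma line_codes_valid e : e \in line_codes -> valid_edge e.
Proof. by rewrite mem_filter => /andP[/andP[]]. Qed.

Lemma line_codes_distinct :
  all (fun e => all (fun g => sym2 (sym2 eq_op) e g ==> (e == g)) line_codes) line_codes.
Proof. by vm_compute. Qed.

Lemma line_codes_complete :
  all (fun q => valid_edge q ==> has (sym2 (sym2 eq_op) q) line_codes) edge_codes.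
Proof. by vm_compute. Qed.

Definition line_vertex0 : LV := Sub _ (@pet_edge_set ((0, 1), (2, 3)) isT).
Definition line_vertex (e : edge_code) : LV := insubd line_vertex0 (edge_set e).

Lemma val_line_vertex e : valid_edge e -> val (line_vertex e) = edge_set e.
Proof. by move=> ve; rewrite insubdK //; apply: pet_edge_set. Qed.

Lemma line_vertex_inj : {in line_codes &, injective line_vertex}.
Proof.
move=> e g es gs /(congr1 val) /eqP.
rewrite !val_line_vertex ?line_codes_valid // eq_edge_set ?line_codes_valid // => eg.
by apply/eqP; apply: (implyP (allP (allP line_codes_distinct e es) g gs)).
Qed.

Lemma line_vertex_onto x : exists2 e, e \in line_codes & line_vertex e = x.
Proof.
case: x => E pE; case/existsP: (pE) => u /existsP[v /and4P[]].
case/cards2P=> i [j [ij ->]] /cards2P[k [l [kl ->]]] dj /eqP E_uv.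
pose q := ((val i, val j), (val k, val l)).
have qE : edge_set q = E by rewrite E_uv /edge_set /pair_set /= !inord_val.
have vq : valid_edge q.
  rewrite /valid_edge /valid_pair /= !ltn_ord !val_eqE ij kl /=.
  by move: dj; rewrite -setI_eq0 -[_ == set0]negbK meet_set2 /meet2 /= !val_eqE.
have q_edge : q \in edge_codes by rewrite !allpairs_f // mem_iota ltn_ord.
have /hasP[e es qe] := implyP (allP line_codes_complete q q_edge) vq.
exists e => //; apply: val_inj; rewrite /= val_line_vertex ?line_codes_valid // -qE.
by apply/eqP; rewrite eq_sym eq_edge_set // line_codes_valid.
Qed.

Fixpoint reach_in (T : eqType) (s : seq T) (r : rel T) (k : nat) (x y : T) : bool :=
  if k is k'.+1 then reach_in s r k' x y || has (fun z => reach_in s r k' x z && r z y) s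
  else x == y.

Lemma reach_inS (T : eqType) (s : seq T) (r : rel T) k x y :
  reach_in s r k.+1 x y = reach_in s r k x y || has (fun z => reach_in s r k x z && r z y) s.
Proof. by []. Qed.

Definition dist_in (T : eqType) (s : seq T) (r : rel T) (k : nat) (x y : T) : bool :=
  reach_in s r k x y && ~~ reach_in s r k.-1 x y.
Definition color_in (T : eqType) (s : seq T) (r : rel T) (x y : T) : color :=
  if dist_in s r 1 x y then cb else if dist_in s r 2 x y then ca else cc.

Definition line_adj : rel edge_code :=
  fun e g => (e != g) && meet2 (sym2 eq_op) e g.

Lemma adjL_line_vertex : {in line_codes &, forall e g,
  adjL (line_vertex e) (line_vertex g) = line_adj e g}.
Proof.
move=> e g es gs; rewrite /adjL (inj_in_eq line_vertex_inj) //.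
by rewrite !val_line_vertex ?meet_edge_set ?line_codes_valid.
Qed.

Lemma reachL_line_vertex k : {in line_codes &, forall e g,
  reachL k (line_vertex e) (line_vertex g) = reach_in line_codes line_adj k e g}.
Proof.
elim: k => [|k IHk] e g es gs; first exact: (inj_in_eq line_vertex_inj).
rewrite [LHS]/= reach_inS IHk //; congr (_ || _).
apply/existsP/hasP => [[z]|[t ts]].
  have [t ts <-] := line_vertex_onto z.
  by rewrite IHk // adjL_line_vertex // => ?; exists t.
by rewrite -IHk // -adjL_line_vertex // => ?; exists (line_vertex t).
Qed.

Lemma distL_line_vertex k : {in line_codes &, forall e g,
  distL k (line_vertex e) (line_vertex g) = dist_in line_codes line_adj k e g}.
Proof. by move=> e g es gs; rewrite /distL !reachL_line_vertex. Qed.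

Lemma colL_line_vertex : {in line_codes &, forall e g,
  colL (line_vertex e) (line_vertex g) = color_in line_codes line_adj e g}.
Proof. by move=> e g es gs; rewrite /colL !distL_line_vertex. Qed.

(* The table [t] is built once, when [tabulate a0 s f] is evaluated, which keeps the lookups
   cheap under [vm_compute]. *)
Definition tabulate (T : eqType) (A : Type) (a0 : A) (s : seq T) (f : T -> T -> A) :
    T -> T -> A :=
  let t := [seq [seq f x y | y <- s] | x <- s] in
  fun x y => nth a0 (nth [::] t (index x s)) (index y s).

Lemma tabulateE (T : eqType) (A : Type) (a0 : A) (s : seq T) (f : T -> T -> A) :
  {in s &, tabulate a0 s f =2 f}.
Proof.
move=> x y xs ys; rewrite /tabulate (nth_map x) ?index_mem // (nth_map y) ?index_mem //.
by rewrite !nth_index.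
Qed.

Lemma line_codes_size : size line_codes = 15.
Proof. by vm_compute. Qed.

Lemma line_codes_uniq : uniq line_codes.
Proof. by vm_compute. Qed.

Lemma line_codes_diameter : all (fun e => all (fun g => (e != g) ==>
  [|| dist_in line_codes line_adj 1 e g, dist_in line_codes line_adj 2 e g
    | dist_in line_codes line_adj 3 e g]) line_codes) line_codes.
Proof. by vm_compute. Qed.

Lemma line_codes_representation :
  representation_on line_codes (tabulate cc line_codes (color_in line_codes line_adj)).
Proof. by vm_compute. Qed.

Theorem mainTheorem11 :
  [/\ #|{: LV}| = 15,
      (forall x y : LV, x != y -> [|| distL 1 x y, distL 2 x y | distL 3 x y]),
      representation colL &
      (forall (X : finType) (col : X -> X -> color),
          representation col -> 15 <= #|X|)].
Proof.
have [inj onto] := (line_vertex_inj, line_vertex_onto).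
split.
- by rewrite (card_transfer inj onto line_codes_uniq) line_codes_size.
- move=> x y; have [e es <-] := onto x; have [g gs <-] := onto y.
  rewrite (inj_in_eq inj) // !distL_line_vertex // => eg.
  exact: implyP (allP (allP line_codes_diameter e es) g gs) eg.
- apply: (representation_transfer inj onto _ line_codes_representation).
  by move=> e g es gs; rewrite tabulateE // colL_line_vertex.
- exact: representation_card.
Qed.
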